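(* The flow rewriting system $\mathsf w$ is terminating: there is no infinite chain of atomic flows $A_1\to_{\mathsf w}A_2\to_{\mathsf w}\cdots$.
   Context: An atomic flow is a tuple $(V,E,\eta,up,lo)$: finite sets of vertices $V$ and edges $E$, a labelling $\eta$ of vertices by interaction, cut, weakening, coweakening, contraction or cocontraction, and maps $up:E\to V\cup\{\top\}$, $lo:E\to V\cup\{\bot\}$ ($\top,\bot\notin V$). Upper edges of $\nu$: those with $lo(\epsilon)=\nu$; lower edges: those with $up(\epsilon)=\nu$. The (upper, lower) edge numbers are $(0,2)$ interaction, $(2,0)$ cut, $(0,1)$ weakening, $(1,0)$ coweakening, $(2,1)$ contraction, $(1,2)$ cocontraction; the directed graph has no directed cycle; and there is a map $\pi:E\to\{+,-\}$ giving all edges of each (co)contraction the same sign and the two edges of each interaction/cut different signs. $A\to_{\mathsf w}B$ means $B$ is obtained from $A$ by one application of one of the following rules, each replacing a subgraph (everything else unchanged): (i) a weakening whose lower edge is an upper edge of a contraction: delete both, merging the contraction's other upper edge and its lower edge into one edge; (ii) a coweakening whose upper edge is a lower edge of a cocontraction: delete both, merging the cocontraction's upper edge and its other lower edge; (iii) a weakening whose lower edge is an upper edge of a cut: delete both, and the cut's other upper edge becomes the upper edge of a new coweakening; (iv) an interaction one of whose lower edges is the upper edge of a coweakening: delete both, and the interaction's other lower edge becomes the lower edge of a new weakening; (v) an edge from a weakening to a coweakening: delete the edge and both vertices; (vi) a weakening whose lower edge is the upper edge of a cocontraction: replace by two new weakenings whose lower edges are the cocontraction's two lower edges; (vii) a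 coweakening whose upper edge is the lower edge of a contraction: replace by two new coweakenings whose upper edges are the contraction's two upper edges. *)

From Stdlib Require Import Relations.
From Stdlib Require List.
From mathcomp Require Import all_boot finmap.

Set Implicit Arguments.
Unset Strict Implicit.
Unset Printing Implicit Defensive.

Local Open Scope fset_scope.

Inductive vlabel : Type :=
  | Interaction | Cut | Weakening | Coweakening | Contraction | Cocontraction.

(** (upper, lower) edge numbers of each kind of vertex. *)
Definition arity (l : vlabel) : nat * nat :=
  match l with
  | Interaction => (0, 2)
  | Cut => (2, 0)
  | Weakening => (0, 1)
  | Coweakening => (1, 0)
  | Contraction => (2, 1)
  | Cocontraction => (1, 2)
  end.

(** Raw data of an atomic flow: finite sets of vertex and edge names (natural
    numbers), the labelling [eta], and [up], [lo] where [None] stands for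
    top (for [up]) and bottom (for [lo]).  Values of [eta], [up], [lo]
    outside [fV], [fE] are irrelevant. *)
Record flow := Flow {
  fV : {fset nat};
  fE : {fset nat};
  eta : nat -> vlabel;
  up : nat -> option nat;
  lo : nat -> option nat
}.

Definition upper_edges (A : flow) (v : nat) : {fset nat} :=
  [fset e in fE A | lo A e == Some v].
Definition lower_edges (A : flow) (v : nat) : {fset nat} :=
  [fset e in fE A | up A e == Some v].

Definition adj (A : flow) (u v : nat) : Prop :=
  exists2 e, e \in fE A & up A e = Some u /\ lo A e = Some v.

Definition incident (A : flow) (e v : nat) : Prop :=
  up A e = Some v \/ lo A e = Some v.

(** Well-formedness: [A] is an atomic flow.  Signs are booleans. *)
Definition is_atomic_flow (A : flow) : Prop :=
  [/\ (forall e v, e \in fE A -> up A e = Some v -> v \in fV A),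
      (forall e v, e \in fE A -> lo A e = Some v -> v \in fV A),
      (forall v, v \in fV A ->
         (#|` upper_edges A v|, #|` lower_edges A v|) = arity (eta A v)),
      (forall v, v \in fV A -> ~ clos_trans nat (adj A) v v) &
      (exists pi : nat -> bool,
         forall v e e', v \in fV A -> e \in fE A -> e' \in fE A ->
           incident A e v -> incident A e' v ->
           ((eta A v = Contraction \/ eta A v = Cocontraction) -> pi e = pi e') /\
           ((eta A v = Interaction \/ eta A v = Cut) -> e <> e' -> pi e <> pi e'))].

(** [replace A B Vd Ed Vn En]: [B] is obtained from [A] by deleting the
    vertices [Vd] and edges [Ed], adding fresh vertices [Vn] (name, label)
    and fresh edges [En] (name, up, lo); everything else is unchanged. *)
Definition replace (A B : flow) (Vd Ed : seq nat) (Vn : seq (nat * vlabel))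
    (En : seq (nat * (option nat * option nat))) : Prop :=
  [/\ [/\ (forall v, v \in fV B <-> ((v \in fV A) && (v \notin Vd)) \/ v \in map fst Vn),
      (forall e, e \in fE B <-> ((e \in fE A) && (e \notin Ed)) \/ e \in map fst En)
        & uniq (map fst Vn) /\ uniq (map fst En)],
      (forall v, v \in map fst Vn -> ~ ((v \in fV A) && (v \notin Vd))),
      (forall e, e \in map fst En -> ~ ((e \in fE A) && (e \notin Ed))) /\
      (forall v, v \in fV A -> v \notin Vd -> eta B v = eta A v) /\
      (forall p, List.In p Vn -> eta B p.1 = p.2),
      (forall e, e \in fE A -> e \notin Ed -> up B e = up A e /\ lo B e = lo A e) &
      (forall p, p \in En -> up B p.1 = p.2.1 /\ lo B p.1 = p.2.2)].

Definition rule_i (A B : flow) : Prop :=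
  exists w c e1 e2 e3 e,
    [/\ [/\ w \in fV A, c \in fV A, eta A w = Weakening & eta A c = Contraction],
        [/\ e1 \in fE A, e2 \in fE A & e3 \in fE A],
        [/\ up A e1 = Some w, lo A e1 = Some c, lo A e2 = Some c, e2 <> e1
          & up A e3 = Some c] &
        replace A B [:: w; c] [:: e1; e2; e3] [::] [:: (e, (up A e2, lo A e3))]].

Definition rule_ii (A B : flow) : Prop :=
  exists k d e1 e2 e3 e,
    [/\ [/\ k \in fV A, d \in fV A, eta A k = Coweakening & eta A d = Cocontraction],
        [/\ e1 \in fE A, e2 \in fE A & e3 \in fE A],
        [/\ lo A e1 = Some k, up A e1 = Some d, up A e2 = Some d, e2 <> e1
          & lo A e3 = Some d] &
        replace A B [:: k; d] [:: e1; e2; e3] [::] [:: (e, (up A e3, lo A e2))]].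

Definition rule_iii (A B : flow) : Prop :=
  exists w t e1 e2 n e,
    [/\ [/\ w \in fV A, t \in fV A, eta A w = Weakening & eta A t = Cut],
        [/\ e1 \in fE A & e2 \in fE A],
        [/\ up A e1 = Some w, lo A e1 = Some t, lo A e2 = Some t & e2 <> e1] &
        replace A B [:: w; t] [:: e1; e2] [:: (n, Coweakening)]
          [:: (e, (up A e2, Some n))]].

Definition rule_iv (A B : flow) : Prop :=
  exists i k e1 e2 n e,
    [/\ [/\ i \in fV A, k \in fV A, eta A i = Interaction & eta A k = Coweakening],
        [/\ e1 \in fE A & e2 \in fE A],
        [/\ up A e1 = Some i, lo A e1 = Some k, up A e2 = Some i & e2 <> e1] &
        replace A B [:: i; k] [:: e1; e2] [:: (n, Weakening)]
          [:: (e, (Some n, lo A e2))]].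

Definition rule_v (A B : flow) : Prop :=
  exists w k e,
    [/\ [/\ w \in fV A, k \in fV A, eta A w = Weakening & eta A k = Coweakening],
        e \in fE A, up A e = Some w /\ lo A e = Some k &
        replace A B [:: w; k] [:: e] [::] [::]].

Definition rule_vi (A B : flow) : Prop :=
  exists w d e1 e2 e3 n1 n2 f2 f3,
    [/\ [/\ w \in fV A, d \in fV A, eta A w = Weakening & eta A d = Cocontraction],
        [/\ e1 \in fE A, e2 \in fE A & e3 \in fE A],
        [/\ up A e1 = Some w, lo A e1 = Some d, up A e2 = Some d, up A e3 = Some d
          & e2 <> e3] &
        replace A B [:: w; d] [:: e1; e2; e3] [:: (n1, Weakening); (n2, Weakening)]
          [:: (f2, (Some n1, lo A e2)); (f3, (Some n2, lo A e3))]].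

Definition rule_vii (A B : flow) : Prop :=
  exists k c e1 e2 e3 n1 n2 f2 f3,
    [/\ [/\ k \in fV A, c \in fV A, eta A k = Coweakening & eta A c = Contraction],
        [/\ e1 \in fE A, e2 \in fE A & e3 \in fE A],
        [/\ up A e1 = Some c, lo A e1 = Some k, lo A e2 = Some c, lo A e3 = Some c
          & e2 <> e3] &
        replace A B [:: k; c] [:: e1; e2; e3] [:: (n1, Coweakening); (n2, Coweakening)]
          [:: (f2, (up A e2, Some n1)); (f3, (up A e3, Some n2))]].

Definition wstep (A B : flow) : Prop :=
  rule_i A B \/ rule_ii A B \/ rule_iii A B \/ rule_iv A B \/
  rule_v A B \/ rule_vi A B \/ rule_vii A B.

(* Each rule deletes more edges than it creates, so the number of edges
   strictly decreases along ->w and no chain can be infinite. *)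

From mathcomp Require Import all_boot finmap.
From mathcomp Require Import zify.

Local Open Scope fset_scope.

Lemma replace_card_fE {A B : flow} {Vd Ed Vn En} {D : seq nat} :
  replace A B Vd Ed Vn En -> uniq D ->
  {subset D <= fE A} -> {subset D <= Ed} ->
  (#|` fE B| + size D <= #|` fE A| + size En)%N.
Proof.
move=> [[_ HE _] _ _ _ _] uD DA DEd.
set SD := [fset x in D]; set SN := [fset x in map fst En].
have sub_B : fE B `<=` (fE A `\` SD) `|` SN.
  apply/fsubsetP => e /HE [/andP [eA eEd]|eN]; rewrite in_fsetU.
    rewrite in_fsetD eA andbT inE; apply/orP; left.
    by apply: contraNN eEd => /DEd.
  by apply/orP; right; rewrite inE.
have SD_A : SD `<=` fE A by apply/fsubsetP => x; rewrite inE => /DA.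
have card_SD : #|` SD| = size D by rewrite card_fseq undup_id.
have card_SN : (#|` SN| <= size En)%N.
  by rewrite card_fseq (leq_trans (size_undup _)) ?size_map.
have := fsubset_leq_card sub_B; have := cardfsUI (fE A `\` SD) SN.
have := cardfsDS SD_A; have := fsubset_leq_card SD_A.
lia.
Qed.

Lemma replace_card_fE_lt {A B : flow} {Vd Ed Vn En} {D : seq nat} :
  replace A B Vd Ed Vn En -> uniq D ->
  {subset D <= fE A} -> {subset D <= Ed} -> (size En < size D)%N ->
  (#|` fE B| < #|` fE A|)%N.
Proof. by move=> R uD DA DEd ltED; have := replace_card_fE R uD DA DEd; lia. Qed.

Lemma wstep_card_fE (A B : flow) : wstep A B -> (#|` fE B| < #|` fE A|)%N.
Proof.
have uniq2 (x y : nat) : y <> x -> uniq [:: x; y].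
  by move=> yx; rewrite /= inE andbT eq_sym; apply/eqP.
case=> [|[|[|[|[|[|]]]]]].
- move=> [w [c [e1 [e2 [e3 [e [[_ _ _ _] [e1A e2A _] [_ _ _ e21 _] R]]]]]]].
  apply: (replace_card_fE_lt R (uniq2 _ _ e21)) => // x.
  + by rewrite !inE => /orP[] /eqP ->.
  + by rewrite !inE => /orP[] /eqP ->; rewrite eqxx ?orbT.
- move=> [k [d [e1 [e2 [e3 [e [[_ _ _ _] [e1A e2A _] [_ _ _ e21 _] R]]]]]]].
  apply: (replace_card_fE_lt R (uniq2 _ _ e21)) => // x.
  + by rewrite !inE => /orP[] /eqP ->.
  + by rewrite !inE => /orP[] /eqP ->; rewrite eqxx ?orbT.
- move=> [w [t [e1 [e2 [n [e [[_ _ _ _] [e1A e2A] [_ _ _ e21] R]]]]]]].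
  apply: (replace_card_fE_lt R (uniq2 _ _ e21)) => // x.
  by rewrite !inE => /orP[] /eqP ->.
- move=> [i [k [e1 [e2 [n [e [[_ _ _ _] [e1A e2A] [_ _ _ e21] R]]]]]]].
  apply: (replace_card_fE_lt R (uniq2 _ _ e21)) => // x.
  by rewrite !inE => /orP[] /eqP ->.
- move=> [w [k [e [[_ _ _ _] eA _ R]]]].
  by apply: (replace_card_fE_lt (D := [:: e]) R) => // x; rewrite inE => /eqP ->.
- move=> [w [d [e1 [e2 [e3 [n1 [n2 [f2 [f3
    [[_ _ ew ed] [e1A e2A e3A] [up1 _ up2 up3 e23] R]]]]]]]]]].
  (* [e1] leaves the weakening [w], while [e2], [e3] leave the cocontraction [d]. *)
  have wd : w <> d by move=> E; move: ew; rewrite E ed.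
  have e1_fresh (e' : nat) : up A e' = Some d -> e1 != e'.
    by move=> upd; apply/eqP => E; apply: wd; move: up1; rewrite E upd => -[].
  apply: (replace_card_fE_lt (D := [:: e1; e2; e3]) R) => // [|x].
  + rewrite /= !inE negb_or (e1_fresh _ up2) (e1_fresh _ up3).
    by rewrite /= andbT; apply/eqP.
  + by rewrite !inE => /or3P[] /eqP ->.
- move=> [k [c [e1 [e2 [e3 [n1 [n2 [f2 [f3
    [[_ _ ek ec] [e1A e2A e3A] [_ lo1 lo2 lo3 e23] R]]]]]]]]]].
  (* [e1] enters the coweakening [k], while [e2], [e3] enter the contraction [c]. *)
  have kc : k <> c by move=> E; move: ek; rewrite E ec.
  have e1_fresh (e' : nat) : lo A e' = Some c -> e1 != e'.
    by move=> loc; apply/eqP => E; apply: kc; move: lo1; rewrite E loc => -[].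
  apply: (replace_card_fE_lt (D := [:: e1; e2; e3]) R) => // [|x].
  + rewrite /= !inE negb_or (e1_fresh _ lo2) (e1_fresh _ lo3).
    by rewrite /= andbT; apply/eqP.
  + by rewrite !inE => /or3P[] /eqP ->.
Qed.

Lemma no_nat_descending_chain (f : nat -> nat) : ~ (forall n, f n.+1 < f n)%N.
Proof.
move=> desc.
have bound n : (f n + n <= f 0)%N.
  by elim: n => [|n IH]; [rewrite addn0 | have := desc n; lia].
by have := bound (f 0).+1; lia.
Qed.

Theorem theorem4p12 :
  ~ (exists As : nat -> flow,
       (forall n, is_atomic_flow (As n)) /\
       (forall n, wstep (As n) (As n.+1))).
Proof.
move=> [As [_ step]].
apply: (@no_nat_descending_chain (fun n => #|` fE (As n)|)) => n.
exact: wstep_card_fE (step n).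
Qed.
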